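(* Let $G = K \rtimes_\varphi \langle t\rangle$ be a finitely generated group, where $K$ is abelian, $\langle t\rangle$ is infinite cyclic and $\varphi\in\mathrm{Aut}(K)$, and let $S$ be a finite symmetric generating set of $G$. Let $P_\varphi=\{a\in K:\ \varphi^n(a)=a\text{ for some } n\ge1\}$. Then the relative growth $r\mapsto |P_\varphi\cap S^r|$ is bounded above by a polynomial in $r$.
   Context: $K$ is written additively and $tkt^{-1}=\varphi(k)$. $S^r$ is the set of elements of word length at most $r$ with respect to $S$. *)

(* The group G = K ⋊_phi <t> is modelled concretely as pairs
   (k, m) : K * int, standing for k t^m, with K an additive abelian group
   (zmodType) and phi an additive automorphism of K (given with its inverse). *)
From mathcomp Require Import all_boot all_order all_algebra.
Set Implicit Arguments. Unset Strict Implicit. Unset Printing Implicit Defensive.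
Import Order.TTheory GRing.Theory Num.Theory.
Local Open Scope ring_scope.

Section SemiDirect.
Variables (K : zmodType) (phi phiinv : K -> K).

Definition zpow (m : int) : K -> K :=
  match m with
  | Posz n => iter n phi
  | Negz n => iter n.+1 phiinv
  end.

(* (a t^m) (b t^n) = (a + phi^m b) t^(m+n), since t k t^-1 = phi k *)
Definition sd_mul (g h : K * int) : K * int :=
  (g.1 + zpow g.2 h.1, g.2 + h.2).
Definition sd_one : K * int := (0, 0).
Definition sd_inv (g : K * int) : K * int :=
  (- zpow (- g.2) g.1, - g.2).

Definition sd_prod (w : seq (K * int)) : K * int := foldr sd_mul sd_one w.

Definition symmetric_set (S : seq (K * int)) : Prop :=
  forall g, g \in S -> sd_inv g \in S.
Definition generates (S : seq (K * int)) : Prop :=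
  forall g : K * int, exists w : seq (K * int), all (mem S) w /\ g = sd_prod w.

Definition in_ball (S : seq (K * int)) (r : nat) (g : K * int) : Prop :=
  exists w : seq (K * int), [/\ all (mem S) w, (size w <= r)%N & g = sd_prod w].

Definition in_Pphi (a : K) : Prop := exists n : nat, (1 <= n)%N /\ iter n phi a = a.
End SemiDirect.

From HB Require Import structures.
From mathcomp Require Import all_boot all_order all_algebra.
From mathcomp Require Import zify.
From Stdlib Require Import Classical.
Set Implicit Arguments. Unset Strict Implicit. Unset Printing Implicit Defensive.
Import GRing.Theory.
Local Open Scope ring_scope.

(* Let X act on K as phi, so that K becomes a Z[X]-module and the first components
   gens of S generate K up to a power of phi.  By the Hilbert basis theorem for Z[X],
   the kernels of h_n(phi), h_n = (X^(n!) - 1)^n, inside the Z[X]-span of gens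
   stabilise at some n0; if h_n0(phi) y is p-periodic then h_(p+n0)(phi) kills y,
   so h_n0(phi) y = 0: the image T of h_n0(phi) contains no nonzero periodic element.
   Modulo T, phi^j a (a in gens) is an integer combination of the finitely many
   phi^k (phi^(n0!) - 1)^i a, k < n0!, i < n0, with binomial coefficients bounded by
   (j+1)^n0.  If e lies in S^r, then phi^(tmax r) e is a sum of at most r terms
   phi^j a with j <= 2 tmax r; distinct periodic elements of S^r thus have distinct
   coefficient vectors, all with entries polynomially bounded in r. *)

Definition increasing (T : Type) (U : nat -> T -> Prop) :=
  forall n x, U n x -> U n.+1 x.

Definition stationary (T : Type) (U : nat -> T -> Prop) :=
  exists n0, forall n, (n0 <= n)%N -> forall x, U n x -> U n0 x.

Lemma increasing_le (T : Type) (U : nat -> T -> Prop) : increasing U ->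
  forall m n, (m <= n)%N -> forall x, U m x -> U n x.
Proof.
move=> incU m n /subnK <- x Umx.
by elim: (n - m)%N => //= k IH; apply: incU.
Qed.

Definition int_subgroup (H : int -> Prop) :=
  [/\ H 0, (forall x y, H x -> H y -> H (x + y)) & (forall x, H x -> H (- x))].

Lemma int_subgroupMr H x z : int_subgroup H -> H x -> H (x * z).
Proof.
case=> H0 HD HN Hx; elim/int_rec: z => [|n IH|n IH]; first by rewrite mulr0.
  by rewrite intS mulrDr mulr1 addrC; apply: HD.
by rewrite -addn1 PoszD opprD mulrDr mulrN1; apply: HD => //; apply: HN.
Qed.

Lemma int_subgroup_cyclic H : int_subgroup H ->
  exists2 g, H g & forall x, H x -> (g %| x)%Z.
Proof.
move=> sgH; have [H0 HD HN] := sgH.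
have Hmod x y : H x -> H y -> H (y %% x)%Z.
  move=> Hx Hy; have -> : (y %% x)%Z = y - (y %/ x)%Z * x.
    by rewrite {2}(divz_eq y x) addrAC subrr add0r.
  apply: HD => //; apply: HN.
  by rewrite mulrC; apply: int_subgroupMr.
have [[x [Hx nz_x]] | no_nz] := classic (exists x, H x /\ x != 0); last first.
  exists 0 => // x Hx; rewrite dvd0z; apply/eqP; apply: NNPP => nz_x.
  by apply: no_nz; exists x; split => //; apply/eqP.
have [v] := ubnP `|x|%N; elim: v x Hx nz_x => [|v IH] x Hx nz_x //= lt_xv.
case: (classic (exists2 y, H y & ~~ (x %| y)%Z)) => [[y Hy ndvd_y] | all_dvd].
  apply: (IH (y %% x)%Z (Hmod x y Hx Hy)).
    by apply: contraNneq ndvd_y => /dvdz_mod0P.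
  have := ltz_mod y nz_x; have := modz_ge0 y nz_x; lia.
exists x => // y Hy; apply/negPn/negP => ndvd_y.
by apply: all_dvd; exists y.
Qed.

Lemma int_subgroup_chain_stationary (U : nat -> int -> Prop) :
  (forall n, int_subgroup (U n)) -> increasing U -> stationary U.
Proof.
move=> sgU incU.
have sg_union : int_subgroup (fun x => exists n, U n x).
  split; first by exists 0%N; case: (sgU 0%N).
  - move=> x y [m Umx] [n Uny]; exists (maxn m n); case: (sgU (maxn m n)) => _ UD _.
    by apply: UD; [exact: increasing_le incU _ _ (leq_maxl m n) _ Umx
                  |exact: increasing_le incU _ _ (leq_maxr m n) _ Uny].
  - by move=> x [n Unx]; exists n; case: (sgU n) => _ _; apply.
have [g [n0 Ug] g_dvd] := int_subgroup_cyclic sg_union.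
exists n0 => n _ x Unx; have := g_dvd x (ex_intro _ n Unx); rewrite dvdz_eq => /eqP <-.
by rewrite mulrC; apply: int_subgroupMr.
Qed.

Lemma int_subgroup_chain2_stationary (J : nat -> nat -> int -> Prop) :
  (forall n d, int_subgroup (J n d)) ->
  (forall d, increasing (J^~ d)) -> (forall n, increasing (J n)) ->
  exists N, forall n, (N <= n)%N -> forall d c, J n d c -> J N d c.
Proof.
move=> sgJ incn incd.
have J_le m n d e c : (m <= n)%N -> (d <= e)%N -> J m d c -> J n e c.
  move=> le_mn le_de /(increasing_le (incn d) le_mn).
  exact: increasing_le (incd n) _ _ le_de c.
have [n1 diag_st] : stationary (fun n => J n n).
  by apply: int_subgroup_chain_stationary => // n c; apply: J_le.
(* Columns d >= n1 are controlled by the diagonal, the finitely many others one by one. *)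
have first_cols m : exists M, forall d, (d < m)%N ->
    forall n, (M <= n)%N -> forall c, J n d c -> J M d c.
  elim: m => [|m [M colsM]]; first by exists 0%N.
  have [Mm colm] := int_subgroup_chain_stationary (sgJ^~ m) (incn m).
  exists (maxn M Mm) => d; rewrite ltnS leq_eqVlt => /predU1P[-> | lt_dm] n le_n c Jc.
    apply: (J_le Mm) (colm n _ _ Jc) => //; first exact: leq_maxr.
    exact: leq_trans (leq_maxr _ _) le_n.
  apply: (J_le M) (colsM d lt_dm n _ _ Jc) => //; first exact: leq_maxl.
  exact: leq_trans (leq_maxl _ _) le_n.
have [M colsM] := first_cols n1.
exists (maxn n1 M) => n le_n d c Jc; have [lt_dn1 | le_n1d] := ltnP d n1.
  apply: (J_le M) (colsM d lt_dn1 n _ _ Jc) => //; first exact: leq_maxr.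
  exact: leq_trans (leq_maxr _ _) le_n.
apply: (J_le n1 _ n1) (diag_st (maxn n d) _ _ _) => //; first exact: leq_maxl.
  exact: leq_trans (leq_maxl _ _) (leq_trans le_n (leq_maxl _ _)).
by apply: (J_le n _ d) Jc; [exact: leq_maxl | exact: leq_maxr].
Qed.

Definition poly_ideal (I : {poly int} -> Prop) :=
  [/\ I 0, (forall f g, I f -> I g -> I (f + g)), (forall f, I f -> I (- f))
    & (forall f, I f -> I (f * 'X))].

Definition lead_coefs (I : {poly int} -> Prop) (d : nat) (c : int) :=
  exists f, [/\ I f, (size f <= d.+1)%N & f`_d = c].

Lemma lead_coefs_subgroup I d : poly_ideal I -> int_subgroup (lead_coefs I d).
Proof.
case=> I0 ID IN _; split; first by exists 0; rewrite size_poly0 coef0.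
  move=> x y [f [If f_le <-]] [g [Ig g_le <-]]; exists (f + g); split.
  - exact: ID.
  - by apply: leq_trans (size_polyD _ _) _; rewrite geq_max f_le g_le.
  - by rewrite coefD.
by move=> x [f [If f_le <-]]; exists (- f); rewrite size_polyN coefN; split => //; apply: IN.
Qed.

Lemma lead_coefsX I d c : poly_ideal I -> lead_coefs I d c -> lead_coefs I d.+1 c.
Proof.
case=> _ _ _ IX [f [If f_le <-]]; exists (f * 'X); rewrite coefMX; split => //.
  exact: IX.
by have [-> | nz_f] := eqVneq f 0; rewrite ?mul0r ?size_poly0 // size_mulX.
Qed.

Lemma size_poly_leq_drop (R : nzRingType) (p : {poly R}) d :
  (size p <= d.+1)%N -> p`_d = 0 -> (size p <= d)%N.
Proof.
rewrite leq_eqVlt => /predU1P[size_p | //] p_d.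
have /eqP : lead_coef p = 0 by rewrite lead_coefE size_p.
by rewrite lead_coef_eq0 => /eqP ->; rewrite size_poly0.
Qed.

Lemma poly_ideal_sub_lead_coefs (I I' : {poly int} -> Prop) :
  poly_ideal I -> poly_ideal I' -> (forall f, I f -> I' f) ->
  (forall d c, lead_coefs I' d c -> lead_coefs I d c) -> forall f, I' f -> I f.
Proof.
move=> [I0 ID IN _] [_ ID' IN' _] sub_II' lc_I'I f.
have [s] := ubnP (size f); elim: s f => // s IH f lt_fs I'f.
case size_f: (size f) => [|d].
  by move/eqP: size_f; rewrite size_poly_eq0 => /eqP ->.
have [h [Ih h_le h_d]] := lc_I'I d f`_d (ex_intro _ f (And3 I'f (eq_leq size_f) erefl)).
have I_fh : I (f - h).
  apply: IH; last by apply: ID' => //; apply: IN'; apply: sub_II'.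
  apply: (@leq_ltn_trans d); last by rewrite -ltnS -size_f.
  apply: size_poly_leq_drop; last by rewrite coefB h_d subrr.
  by apply: leq_trans (size_polyD _ _) _; rewrite geq_max size_polyN size_f leqnn.
by rewrite -(subrK h f); apply: ID.
Qed.

Lemma poly_ideal_chain_stationary (I : nat -> {poly int} -> Prop) :
  (forall n, poly_ideal (I n)) -> increasing I -> stationary I.
Proof.
move=> idI incI.
have [N lc_st] : exists N, forall n, (N <= n)%N ->
    forall d c, lead_coefs (I n) d c -> lead_coefs (I N) d c.
  apply: int_subgroup_chain2_stationary => [n d | d n c | n d c].
  - exact: lead_coefs_subgroup.
  - by case=> f [If f_le f_d]; exists f; split => //; apply: incI.
  - exact: lead_coefsX.
exists N => n le_Nn; apply: (poly_ideal_sub_lead_coefs (idI N) (idI n)).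
  exact: increasing_le incI _ _ le_Nn.
exact: lc_st.
Qed.

Lemma subrX1_dvd (R : comPzRingType) (x : R) a b : (a %| b)%N ->
  exists q, x ^+ b - 1 = q * (x ^+ a - 1).
Proof.
case/dvdnP=> k ->; exists (\sum_(i < k) (x ^+ a) ^+ (k.-1 - i) * 1 ^+ i).
by rewrite mulnC exprM -[in LHS](expr1n R k) subrXX mulrC.
Qed.

Lemma leq_expn2r m n e : (m <= n)%N -> (m ^ e <= n ^ e)%N.
Proof. by move=> le_mn; elim: e => // e IH; rewrite !expnS leq_mul. Qed.

Lemma bin_leq_expn n m : ('C(n, m) <= n ^ m)%N.
Proof.
apply: leq_trans (_ : n ^_ m <= _)%N.
  by rewrite -bin_ffact leq_pmulr ?fact_gt0.
rewrite ffact_prod -[X in (n ^ X)%N](card_ord m) -prod_nat_const.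
by apply: leq_prod => i _; apply: leq_subr.
Qed.

Section BoundedCombinations.
Variables (K : zmodType) (B : seq K) (T : K -> Prop).
Hypotheses (T0 : T 0) (TB : forall x y, T x -> T y -> T (x - y)).

Definition comb (c : 'I_(size B) -> int) := \sum_(i < size B) B`_i *~ c i.

Definition bounded_comb (l : nat) (x : K) :=
  exists c : 'I_(size B) -> int, (forall i, (`|c i| <= l)%N) /\ T (x - comb c).

Lemma bounded_comb_le l l' x : (l <= l')%N -> bounded_comb l x -> bounded_comb l' x.
Proof. by move=> le_l [c [c_le Tx]]; exists c; split => // i; apply: leq_trans le_l. Qed.

Lemma bounded_combD l1 l2 x y :
  bounded_comb l1 x -> bounded_comb l2 y -> bounded_comb (l1 + l2) (x + y).
Proof.
move=> [c1 [c1_le Tx]] [c2 [c2_le Ty]]; exists (fun i => c1 i + c2 i); split.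
  by move=> i; move: (c1_le i) (c2_le i); lia.
suff -> : x + y - comb (fun i => c1 i + c2 i) = (x - comb c1) - (comb c2 - y).
  by apply: TB => //; rewrite -opprB -sub0r; apply: TB.
rewrite /comb (eq_bigr (fun i : 'I_(size B) => B`_i *~ c1 i + B`_i *~ c2 i)) => [|i _].
  by rewrite big_split /= opprD addrACA opprB.
exact: mulrzDr.
Qed.

Lemma bounded_comb_T x : T x -> bounded_comb 0 x.
Proof.
by exists (fun=> 0); split => //; rewrite /comb big1 ?subr0 // => i _; rewrite mulr0z.
Qed.

Lemma bounded_comb_mem x : x \in B -> bounded_comb 1 x.
Proof.
rewrite -index_mem => ltxB; pose i0 := Ordinal ltxB.
exists (fun i => (i == i0)%:Z); split => [i|]; first by case: (i == i0).
rewrite /comb (bigD1 i0) //= eqxx mulr1z nth_index -?index_mem // big1 ?addr0 ?subrr //.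
by move=> i /negbTE ->; rewrite mulr0z.
Qed.

Lemma bounded_combMn l x m : bounded_comb l x -> bounded_comb (l * m) (x *+ m).
Proof.
move=> bx; elim: m => [|m IH]; first by rewrite muln0 mulr0n; apply: bounded_comb_T.
by rewrite mulnS mulrS; apply: bounded_combD.
Qed.

Lemma bounded_comb_sum l (I : eqType) (r : seq I) (F : I -> K) :
  {in r, forall i, bounded_comb l (F i)} -> bounded_comb (l * size r) (\sum_(i <- r) F i).
Proof.
elim: r => [|i r IH] bF; first by rewrite big_nil muln0; apply: bounded_comb_T.
rewrite big_cons mulnS; apply: bounded_combD; first by apply: bF; rewrite mem_head.
by apply: IH => j rj; apply: bF; rewrite inE rj orbT.
Qed.

Lemma bounded_comb_size_le l (s : seq K) : uniq s ->
  {in s &, forall x y, T (x - y) -> x = y} -> {in s, forall x, bounded_comb l x} ->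
  (size s <= (2 * l).+1 ^ size B)%N.
Proof.
move=> s_uniq s_sep s_comb.
pose coef (c : {ffun 'I_(size B) -> 'I_(2 * l).+1}) i := (c i)%:Z - l%:Z.
have /fin_all_exists [code code_comb] : forall x : seq_sub s,
    exists c : {ffun 'I_(size B) -> 'I_(2 * l).+1}, T (val x - comb (coef c)).
  move=> -[x sx]; have [c [c_le Tx]] := s_comb x sx.
  pose c' := [ffun i => inord (absz (c i + l%:Z))] : {ffun 'I_(size B) -> 'I_(2 * l).+1}.
  exists c'; suff -> : comb (coef c') = comb c by [].
  apply: eq_bigr => i _; have ci_le := c_le i.
  by rewrite /coef ffunE inordK; [congr (_ *~ _) |]; lia.
have code_inj : injective code.
  move=> x y eq_xy; apply: val_inj; apply: s_sep (valP x) (valP y) _.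
  have := TB (code_comb x) (code_comb y); rewrite eq_xy.
  by rewrite opprB addrA subrK.
by have := leq_card code code_inj; rewrite card_seq_sub // card_ffun !card_ord.
Qed.
End BoundedCombinations.

Section PhiModule.
Variables (K : zmodType) (phi : K -> K).
Hypothesis phiD : {morph phi : x y / x + y}.

Lemma phi0 : phi 0 = 0.
Proof. by apply: (@addrI _ (phi 0)); rewrite -phiD !addr0. Qed.

HB.instance Definition _ := GRing.isNmodMorphism.Build K K phi (phi0, phiD).

Lemma iter_phi_is_additive n : nmod_morphism (iter n phi).
Proof.
split; first by elim: n => //= n ->; rewrite raddf0.
by elim: n => [|n IH] x y //=; rewrite IH raddfD.
Qed.

HB.instance Definition _ n :=
  GRing.isNmodMorphism.Build K K (iter n phi) (iter_phi_is_additive n).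

(* [pact p x] is [p(phi) x]: K is a Z[X]-module with X acting as phi. *)
Definition pact (p : {poly int}) (x : K) : K :=
  \sum_(i < size p) iter i phi x *~ p`_i.

Lemma pact_widen n (p : {poly int}) x : (size p <= n)%N ->
  pact p x = \sum_(i < n) iter i phi x *~ p`_i.
Proof.
move=> le_pn; rewrite /pact (big_ord_widen n (fun i => iter i phi x *~ p`_i)) //.
rewrite big_mkcond; apply: eq_bigr => i _; case: ltnP => // le_pi.
by rewrite nth_default // mulr0z.
Qed.

Lemma pact_is_additive (p : {poly int}) : nmod_morphism (pact p).
Proof.
split; first by rewrite /pact big1 // => i _; rewrite raddf0 mul0rz.
by move=> x y; rewrite /pact -big_split; apply: eq_bigr => i _; rewrite raddfD mulrzDl.
Qed.

HB.instance Definition _ p := GRing.isNmodMorphism.Build K K (pact p) (pact_is_additive p).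

Lemma pact0 x : pact 0 x = 0.
Proof. by rewrite /pact size_poly0 big_ord0. Qed.

Lemma pactD x : {morph pact^~ x : p q / p + q}.
Proof.
move=> p q; set n := maxn (size p) (size q).
rewrite !(@pact_widen n) ?leq_maxl ?leq_maxr ?size_polyD // -big_split.
by apply: eq_bigr => i _; rewrite coefD mulrzDr.
Qed.

Lemma pactN (p : {poly int}) x : pact (- p) x = - pact p x.
Proof. by rewrite /pact size_polyN -sumrN; apply: eq_bigr => i _; rewrite coefN mulrNz. Qed.

Lemma pact_sum (I : Type) (r : seq I) (P : pred I) (F : I -> {poly int}) x :
  pact (\sum_(i <- r | P i) F i) x = \sum_(i <- r | P i) pact (F i) x.
Proof. exact: (big_morph (pact^~ x) (pactD x) (pact0 x)). Qed.

Lemma pactMn (p : {poly int}) n x : pact (p *+ n) x = pact p x *+ n.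
Proof. by elim: n => [|n IH]; rewrite ?mulr0n ?pact0 // !mulrS pactD IH. Qed.

Lemma pact_phi (p : {poly int}) x : pact p (phi x) = phi (pact p x).
Proof.
rewrite /pact raddf_sum; apply: eq_bigr => i _.
by rewrite raddfMz -iterSr.
Qed.

Lemma pact_iter (p : {poly int}) n x : pact p (iter n phi x) = iter n phi (pact p x).
Proof. by elim: n => //= n <-; rewrite pact_phi. Qed.

Lemma pactMX (p : {poly int}) x : pact (p * 'X) x = phi (pact p x).
Proof.
have [-> | nz_p] := eqVneq p 0; first by rewrite mul0r pact0 raddf0.
rewrite /pact size_mulX // big_ord_recl coefMX /= mulr0z add0r raddf_sum.
by apply: eq_bigr => i _; rewrite coefMX /= raddfMz.
Qed.

Lemma pactC (c : int) x : pact c%:P x = x *~ c.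
Proof. by rewrite (@pact_widen 1) ?size_polyC ?leq_b1 // big_ord1 coefC. Qed.

Lemma pactM (p q : {poly int}) x : pact (p * q) x = pact p (pact q x).
Proof.
elim/poly_ind: p => [|p c IH]; first by rewrite mul0r !pact0.
rewrite mulrDl mulrAC !pactD !pactMX IH pactC mul_polyC; congr (_ + _).
rewrite (@pact_widen (size q)) ?size_scale_leq // /pact mulrz_suml.
by apply: eq_bigr => i _; rewrite coefZ mulrzA mulrzAC.
Qed.

Lemma pact1 x : pact 1 x = x.
Proof. exact: pactC. Qed.

Lemma pactXn n x : pact 'X^n x = iter n phi x.
Proof. by elim: n => [|n IH]; rewrite ?expr0 ?pact1 // exprSr pactMX IH. Qed.

Lemma pact_Xn_sub1_periodic p (x : K) : iter p phi x = x -> pact ('X^p - 1) x = 0.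
Proof. by move=> px; rewrite pactD pactN pactXn pact1 px subrr. Qed.

Definition submod (U : K -> Prop) :=
  [/\ U 0, (forall x y, U x -> U y -> U (x + y)), (forall x, U x -> U (- x))
    & (forall x, U x -> U (phi x))].

Lemma submodB U x y : submod U -> U x -> U y -> U (x - y).
Proof. by case=> _ UD UN _ Ux Uy; apply: UD => //; apply: UN. Qed.

Lemma submodI U V : submod U -> submod V -> submod (fun x => U x /\ V x).
Proof.
case=> U0 UD UN UX [V0 VD VN VX]; split => //.
- by move=> x y [Ux Vx] [Uy Vy]; split; [apply: UD | apply: VD].
- by move=> x [Ux Vx]; split; [apply: UN | apply: VN].
- by move=> x [Ux Vx]; split; [apply: UX | apply: VX].
Qed.

Fixpoint span (A : seq K) (x : K) : Prop :=
  if A is a :: A' then exists f v, span A' v /\ x = pact f a + v else x = 0.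

Lemma span_submod A : submod (span A).
Proof.
elim: A => [|a A [S0 SD SN SX]] /=.
  by split => [|x y -> ->|x ->|x ->]; rewrite ?addr0 ?oppr0 ?raddf0.
split; first by exists 0, 0; rewrite pact0 addr0.
- move=> _ _ [f [v [Av ->]]] [g [w [Aw ->]]]; exists (f + g), (v + w).
  by split; [apply: SD | rewrite pactD addrACA].
- by move=> _ [f [v [Av ->]]]; exists (- f), (- v); split; [apply: SN | rewrite pactN opprD].
- move=> _ [f [v [Av ->]]]; exists (f * 'X), (phi v).
  by split; [apply: SX | rewrite pactMX raddfD].
Qed.

Lemma span_pact A a f : a \in A -> span A (pact f a).
Proof.
elim: A => //= b A IH; rewrite inE => /predU1P[-> | aA].
  by exists f, 0; split; [case: (span_submod A) | rewrite addr0].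
by exists 0, (pact f a); split; [apply: IH | rewrite pact0 add0r].
Qed.

Lemma span_sum A (I : eqType) (r : seq I) (F : I -> K) :
  {in r, forall i, span A (F i)} -> span A (\sum_(i <- r) F i).
Proof.
case: (span_submod A) => S0 SD _ _.
elim: r => [|i r IH] AF; rewrite ?big_nil ?big_cons //.
apply: SD; first by apply: AF; rewrite mem_head.
by apply: IH => j rj; apply: AF; rewrite inE rj orbT.
Qed.

Lemma span_cons_ideal a A U : submod U ->
  poly_ideal (fun f => exists2 v, span A v & U (pact f a + v)).
Proof.
case=> U0 UD UN UX; case: (span_submod A) => S0 SD SN SX; split.
- by exists 0; rewrite ?pact0 ?addr0.
- move=> f g [v Av Uf] [w Aw Ug]; exists (v + w); first exact: SD.
  by rewrite pactD addrACA; apply: UD.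
- by move=> f [v Av Uf]; exists (- v); [apply: SN | rewrite pactN -opprD; apply: UN].
- by move=> f [v Av Uf]; exists (phi v); [apply: SX | rewrite pactMX -raddfD; apply: UX].
Qed.

(* Induction on the generators: the chain of coefficient ideals of the first generator
   and the chain cut down to the span of the others both become stationary. *)
Lemma submod_chain_stationary A (U : nat -> K -> Prop) :
  (forall n, submod (U n)) -> increasing U -> (forall n x, U n x -> span A x) ->
  stationary U.
Proof.
elim: A U => [|a A IH] U subU incU UA.
  by exists 0%N => n _ x /UA /= ->; case: (subU 0%N).
have [n1 st1] : stationary (fun n x => U n x /\ span A x).
  apply: IH => [n | n x [/incU] | n x []] //; exact: submodI (span_submod A).
have [n2 st2] : stationary (fun n f => exists2 v, span A v & U n (pact f a + v)).
  apply: poly_ideal_chain_stationary => [n | n f [v Av Uf]]; first exact: span_cons_ideal.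
  by exists v => //; apply: incU.
pose N := maxn n1 n2; exists N => n le_Nn u Unu.
have [f [v [Av def_u]]] := UA n u Unu.
have [w Aw UNw] : exists2 w, span A w & U N (pact f a + w).
  have Inf : exists2 v, span A v & U n (pact f a + v) by exists v; rewrite -?def_u.
  have [w Aw Uw] := st2 n (leq_trans (leq_maxr _ _) le_Nn) f Inf.
  by exists w => //; apply: increasing_le incU _ _ (leq_maxr n1 n2) _ Uw.
have Unw : U n (pact f a + w) by apply: increasing_le incU _ _ le_Nn _ UNw.
have def_vw : v - w = u - (pact f a + w) by rewrite def_u opprD addrACA subrr add0r.
have [Un1vw _] : U n1 (v - w) /\ span A (v - w).
  apply: st1 (leq_trans (leq_maxl _ _) le_Nn) _ _.
  by split; [rewrite def_vw; apply: submodB | apply: submodB (span_submod A) _ _].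
have -> : u = (pact f a + w) + (v - w) by rewrite def_vw addrC subrK.
case: (subU N) => _ UD _ _; apply: UD => //.
exact: increasing_le incU _ _ (leq_maxl n1 n2) _ Un1vw.
Qed.

Definition hpoly n : {poly int} := ('X^(n`!) - 1) ^+ n.

Lemma hpoly_dvdS n : exists q, hpoly n.+1 = q * hpoly n.
Proof.
have [q def_q] := subrX1_dvd ('X : {poly int}) (dvdn_mull n.+1 (dvdnn n`!)).
exists (q ^+ n.+1 * ('X^(n`!) - 1)).
by rewrite /hpoly factS def_q exprMn [(_ - 1) ^+ n.+1]exprS mulrA.
Qed.

(* With M = (p + n)!, both X^p - 1 and X^(n!) - 1 divide X^M - 1, so hpoly (p + n)
   factors through (X^p - 1) * hpoly n. *)
Lemma hpoly_kills_periodic_preimage p n y : (0 < p)%N ->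
  iter p phi (pact (hpoly n) y) = pact (hpoly n) y -> pact (hpoly (p + n)) y = 0.
Proof.
move=> p_gt0 z_per; set M := (p + n)`!.
have p_range : (0 < p <= p + n)%N by rewrite p_gt0 leq_addr.
have [qp def_qp] := subrX1_dvd ('X : {poly int}) (dvdn_fact p_range).
have [qn def_qn] : exists q, 'X^M - 1 = q * ('X^(n`!) - 1 : {poly int}).
  by apply: subrX1_dvd; rewrite /M -(ffact_fact (leq_addr n p)) addKn dvdn_mull.
have def_p : ('X^M - 1) ^+ p = ('X^M - 1) ^+ p.-1 * qp * ('X^p - 1).
  by rewrite -mulrA -def_qp -exprSr prednK.
have def_n : ('X^M - 1) ^+ n = qn ^+ n * hpoly n by rewrite def_qn exprMn.
rewrite /hpoly exprD -/M def_p def_n mulrACA mulrA -/(hpoly n).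
by rewrite pactM pactM pact_Xn_sub1_periodic // raddf0.
Qed.

Variable phiinv : K -> K.
Hypotheses (phiK : cancel phi phiinv) (phiinvK : cancel phiinv phi).

Lemma iter_phiK n : cancel (iter n phi) (iter n phiinv).
Proof. by elim: n => // n IH x; rewrite iterSr iterS phiK IH. Qed.

Lemma iter_phiinvK n : cancel (iter n phiinv) (iter n phi).
Proof. by elim: n => // n IH x; rewrite iterSr iterS phiinvK IH. Qed.

Lemma iter_phi_inj n : injective (iter n phi).
Proof. exact: can_inj (iter_phiK n). Qed.

Lemma in_Pphi_iterB j x y : in_Pphi phi x -> in_Pphi phi y ->
  in_Pphi phi (iter j phi x - iter j phi y).
Proof.
move=> [p [p_gt0 px]] [q [q_gt0 qy]]; exists (p * q)%N.
split; first by rewrite muln_gt0 p_gt0.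
have pq_x : iter (p * q) phi x = x by rewrite mulnC iterM iter_fix.
have pq_y : iter (p * q) phi y = y by rewrite iterM iter_fix.
by rewrite raddfB /= -!iterD !(addnC _ j) !iterD pq_x pq_y.
Qed.

(* The kernels of hpoly n in the span of A become stationary at some n0; an element
   of that kernel killed by some hpoly (p + n0) is then killed by hpoly n0. *)
Lemma periodic_image_hpoly_eq0 A : (forall y, exists J, span A (iter J phi y)) ->
  exists n0, forall y, in_Pphi phi (pact (hpoly n0) y) -> pact (hpoly n0) y = 0.
Proof.
move=> A_gen; pose U n x := span A x /\ pact (hpoly n) x = 0.
have [n0 U_st] : stationary U.
  apply: (@submod_chain_stationary A) => [n | n x [Ax hx] | n x []] //.
    apply: submodI (span_submod A) _; split => [|x y|x|x] /=; rewrite ?raddf0 //.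
    - by move=> hx hy; rewrite raddfD /= hx hy addr0.
    - by move=> hx; rewrite raddfN /= hx oppr0.
    - by move=> hx; rewrite pact_phi hx raddf0.
  by split => //; have [q ->] := hpoly_dvdS n; rewrite pactM hx raddf0.
exists n0 => y [p [p_gt0 per_z]].
have [J AJy] := A_gen y; apply: (@iter_phi_inj J); rewrite raddf0 -pact_iter.
have per_Jz : iter p phi (pact (hpoly n0) (iter J phi y)) = pact (hpoly n0) (iter J phi y).
  by rewrite pact_iter -iterD addnC iterD per_z.
have U_Jy := conj AJy (hpoly_kills_periodic_preimage p_gt0 per_Jz).
by have [] := U_st (p + n0)%N (leq_addl _ _) _ U_Jy.
Qed.

Lemma iter_zpow J (m : int) x : 0 <= J%:Z + m ->
  iter J phi (zpow phi phiinv m x) = iter `|J%:Z + m| phi x.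
Proof.
case: m => n /= Jm_ge0; first by rewrite iterD.
have /subnK <- : (n.+1 <= J)%N by move: Jm_ge0; rewrite NegzE; lia.
rewrite iterD -iterS iter_phiinvK; congr (iter _ phi x); rewrite NegzE; lia.
Qed.

Variable S : seq (K * int).

Definition gens := [seq s.1 | s <- S].
Definition tmax := (\max_(s <- S) `|s.2|)%N.

(* The K-part of (a_1, m_1) ... (a_k, m_k) is the sum of the phi^(m_1 + ... + m_(i-1)) a_i;
   the shift phi^J makes all these exponents nonnegative. *)
Lemma iter_sd_prod_fst (w : seq (K * int)) J :
  all (mem S) w -> (tmax * size w <= J)%N ->
  exists l : seq (nat * K), [/\ size l = size w,
    all (fun q => (q.1 <= J + tmax * size w)%N && (q.2 \in gens)) l &
    iter J phi (sd_prod phi phiinv w).1 = \sum_(q <- l) iter q.1 phi q.2].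
Proof.
elim: w J => [|s w IH] J /=; first by exists [::]; rewrite big_nil raddf0.
case/andP=> Ss Sw; rewrite !mulnS => le_J.
have le_s2 : (`|s.2| <= tmax)%N by apply: (leq_bigmax_seq (F := fun s => `|s.2|%N)).
have Js_ge0 : 0 <= J%:Z + s.2 by lia.
have [l [size_l l_bnd l_sum]] := IH (absz (J%:Z + s.2)) Sw (ltac:(lia)).
exists ((J, s.1) :: l); split; first by rewrite /= size_l.
  rewrite /= leq_addr map_f //=; apply/allP => -[j a] lq.
  by have /andP[/= le_j ->] := allP l_bnd _ lq; rewrite andbT; lia.
by rewrite big_cons raddfD /= iter_zpow // l_sum.
Qed.

Hypothesis S_gen : generates phi phiinv S.

Lemma span_gens y : exists J, span gens (iter J phi y).
Proof.
have [w [Sw def_y]] := S_gen (y, 0).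
have [l [_ l_bnd l_sum]] := iter_sd_prod_fst Sw (leqnn (tmax * size w)).
exists (tmax * size w)%N; rewrite [y](congr1 fst def_y) l_sum.
apply: span_sum => q /(allP l_bnd) /andP[_ gens_q].
by rewrite -pactXn; apply: span_pact.
Qed.

Variable n0 : nat.

Definition image_hpoly (x : K) := exists y, x = pact (hpoly n0) y.

Lemma image_hpoly0 : image_hpoly 0.
Proof. by exists 0; rewrite raddf0. Qed.

Lemma image_hpolyB x y : image_hpoly x -> image_hpoly y -> image_hpoly (x - y).
Proof. by move=> [u ->] [v ->]; exists (u - v); rewrite raddfB. Qed.

Definition dpoly : {poly int} := 'X^(n0`!) - 1.

(* Modulo the image of hpoly n0 = dpoly ^+ n0, phi^j a reduces to these elements. *)
Definition residue_gens : seq K :=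
  [seq pact q a | q <- [seq 'X^k * dpoly ^+ i | k <- iota 0 n0`!, i <- iota 0 n0],
                  a <- gens].

Notation bcomb := (bounded_comb residue_gens image_hpoly).

(* Write X^j = X^k (dpoly + 1)^q with k < n0! and expand binomially: the terms with
   dpoly ^+ i, i >= n0, lie in the image of hpoly n0, the others have coefficients
   'C(q, i) <= j.+1 ^ n0. *)
Lemma bounded_comb_iter j a : a \in gens -> bcomb (j.+1 ^ n0.+1) (iter j phi a).
Proof.
move=> gens_a; have N_gt0 := fact_gt0 n0.
set q := (j %/ n0`!)%N; set k := (j %% n0`!)%N.
have Xj : ('X^j : {poly int}) = 'X^k * (dpoly + 1) ^+ q.
  by rewrite /dpoly subrK -exprM -exprD mulnC addnC -divn_eq.
rewrite -pactXn Xj exprD1n -(big_mkord xpredT (fun i => dpoly ^+ i *+ 'C(q, i))).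
rewrite mulr_sumr pact_sum.
under eq_bigr do rewrite mulrnAr pactMn.
apply: (@bounded_comb_le _ _ _ (j.+1 ^ n0 * size (index_iota 0 q.+1))%N).
  by rewrite size_iota subn0 expnSr leq_mul // ltnS leq_div.
apply: (bounded_comb_sum image_hpoly0 image_hpolyB) => i _.
have [lt_in0 | le_n0i] := ltnP i n0.
  apply: (@bounded_comb_le _ _ _ (1 * 'C(q, i))%N).
    rewrite mul1n; apply: leq_trans (bin_leq_expn q i) _.
    apply: leq_trans (leq_expn2r i (_ : q <= j.+1)%N) _.
      by apply: leq_trans (leq_div j _) _.
    exact: leq_pexp2l (ltnW lt_in0).
  apply: (bounded_combMn image_hpoly0 image_hpolyB).
  apply: (bounded_comb_mem image_hpoly0); apply: allpairs_f => //.
  by apply: allpairs_f; rewrite mem_iota //= ?add0n ?ltn_pmod.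
apply: (@bounded_comb_le _ _ _ (0 * 'C(q, i))%N) => //.
apply: (bounded_combMn image_hpoly0 image_hpolyB); apply: bounded_comb_T.
exists (pact ('X^k * dpoly ^+ (i - n0)) a).
by rewrite -pactM /hpoly -/dpoly mulrCA -exprD subnKC.
Qed.

Lemma bounded_comb_ball r e : in_ball phi phiinv S r (e, 0) ->
  bcomb (r * (2 * tmax * r).+1 ^ n0.+1) (iter (tmax * r) phi e).
Proof.
move=> [w [Sw size_w def_e]]; rewrite [e](congr1 fst def_e).
have tw_le := leq_mul (leqnn tmax) size_w.
have [l [size_l l_bnd ->]] := iter_sd_prod_fst Sw tw_le.
apply: (@bounded_comb_le _ _ _ ((2 * tmax * r).+1 ^ n0.+1 * size l)%N).
  by rewrite mulnC leq_mul // size_l.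
apply: (bounded_comb_sum image_hpoly0 image_hpolyB) => -[m b].
move=> /(allP l_bnd) /andP[/= le_m gens_b].
apply: bounded_comb_le (bounded_comb_iter m gens_b).
by apply: leq_expn2r; rewrite ltnS; lia.
Qed.

Hypothesis periodic_image_eq0 :
  forall y, in_Pphi phi (pact (hpoly n0) y) -> pact (hpoly n0) y = 0.

(* Shifting by phi^(tmax r) is injective and keeps periodicity, and two periodic
   elements congruent modulo the image of hpoly n0 coincide. *)
Lemma size_periodic_ball_le r (s : seq K) : uniq s ->
  (forall a, a \in s -> in_Pphi phi a /\ in_ball phi phiinv S r (a, 0)) ->
  (size s <= (2 * (r * (2 * tmax * r).+1 ^ n0.+1)).+1 ^ size residue_gens)%N.
Proof.
move=> s_uniq s_ball; rewrite -(size_map (iter (tmax * r) phi)).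
apply: (bounded_comb_size_le image_hpolyB).
- by rewrite map_inj_uniq //; apply: iter_phi_inj.
- move=> _ _ /mapP[x sx ->] /mapP[y sy ->] [z def_z].
  apply/eqP; rewrite -subr_eq0 def_z; apply/eqP/periodic_image_eq0; rewrite -def_z.
  by apply: in_Pphi_iterB; [case: (s_ball x sx) | case: (s_ball y sy)].
- by move=> _ /mapP[x sx ->]; apply: bounded_comb_ball; case: (s_ball x sx).
Qed.

End PhiModule.

Lemma count_bound_poly t n0 n r :
  ((2 * (r * (2 * t * r).+1 ^ n0.+1)).+1 ^ n <=
    (2 * (2 * t).+1 ^ n0.+1 + 1) ^ n * r.+1 ^ (n0.+2 * n))%N.
Proof.
rewrite mulnC expnM -expnMn; apply: leq_expn2r.
have le_tr : ((2 * t * r).+1 ^ n0.+1 <= (2 * t).+1 ^ n0.+1 * r.+1 ^ n0.+1)%N.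
  by rewrite -expnMn; apply: leq_expn2r; nia.
have r_pos : (1 <= r.+1 ^ n0.+1)%N by rewrite expn_gt0.
rewrite (expnS r.+1 n0.+1); move: le_tr r_pos.
set X := ((2 * t).+1 ^ n0.+1)%N; set Y := (r.+1 ^ n0.+1)%N.
set Z := ((2 * t * r).+1 ^ n0.+1)%N; nia.
Qed.

Theorem corollary3p13 (K : zmodType) (phi phiinv : K -> K)
  (phi_add : forall x y : K, phi (x + y) = phi x + phi y)
  (phiK : cancel phi phiinv) (phiinvK : cancel phiinv phi)
  (S : seq (K * int))
  (S_sym : symmetric_set phi phiinv S)
  (S_gen : generates phi phiinv S) :
  exists C d : nat, forall (r : nat) (s : seq K), uniq s ->
    (forall a, a \in s -> in_Pphi phi a /\ in_ball phi phiinv S r (a, 0)) ->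
    (size s <= C * r.+1 ^ d)%N.
Proof.
have gen := span_gens phi_add phiinvK S_gen.
have [n0 n0_free] := periodic_image_hpoly_eq0 phi_add phiK gen.
pose n := size (residue_gens phi S n0).
exists ((2 * (2 * tmax S).+1 ^ n0.+1 + 1) ^ n)%N, (n0.+2 * n)%N => r s s_uniq s_ball.
apply: leq_trans (size_periodic_ball_le phi_add phiK phiinvK n0_free s_uniq s_ball) _.
exact: count_bound_poly.
Qed.
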